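(* Let $\lambda>1/2$. For every real $z>2$, $$\int_{-2}^{2}\frac{(4-x^2)^{\lambda-3/2}}{(z-x)^{\lambda}}\,dx \;=\; C_\lambda\,\frac{G(z)^{\lambda}}{1-G(z)^2}\;=\;C_\lambda\,\frac{G(z)^{\lambda-1}}{\sqrt{z^2-4}},$$ where $C_\lambda=\int_{-2}^{2}(4-x^2)^{\lambda-3/2}dx$. Moreover, for real $z>2$, $$\frac{G(z)^{\lambda-1}}{\sqrt{z^2-4}}=\exp\left(-\lambda\int_{\mathbb{R}}\log(z-x)\,\tau_\lambda(dx)\right),\qquad \tau_\lambda(dx)=\Big(1-\frac1\lambda\Big)\frac{\mathbf 1_{[-2,2]}(x)\,dx}{\pi\sqrt{4-x^2}}+\frac1\lambda\cdot\frac{\delta_{-2}+\delta_2}{2}(dx),$$ and the signed measure $\tau_\lambda$ (of total mass $1$) is a probability measure if and only if $\lambda\ge 1$.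
   Context: $G(z)=\int_{-2}^2\frac{1}{z-x}\frac{\sqrt{4-x^2}}{2\pi}dx=\frac{z-\sqrt{z^2-4}}{2}$ is the Cauchy–Stieltjes transform of the standard Wigner law; for real $z>2$, $G(z)\in(0,1)$. $\delta_a$ denotes the Dirac mass at $a$. *)

From Stdlib Require Import Reals Lra.
Open Scope R_scope.

(* Cauchy-Stieltjes transform of the semicircle law, via its closed form
   (given in the paper's context) for real z > 2. *)
Definition G (z : R) : R := (z - sqrt (z ^ 2 - 4)) / 2.

(* For b <= a the interval is empty and the integral is 0. *)
Definition ImproperInt (f : R -> R) (a b l : R) : Prop :=
  (a < b /\
   forall eps, 0 < eps -> exists delta, 0 < delta /\
     forall a' b', a < a' < a + delta -> b - delta < b' < b -> a' < b' ->
       exists pr : Riemann_integrable f a' b', Rabs (RiemannInt pr - l) < eps)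
  \/ (b <= a /\ l = 0).

(* Arcsine density 1_{[-2,2]}(x) / (pi sqrt(4 - x^2)) (on the open interval). *)
Definition arcsine_dens (x : R) : R := / (PI * sqrt (4 - x ^ 2)).

Definition ind_in (a b p : R) : R :=
  if Rle_dec a p then (if Rle_dec p b then 1 else 0) else 0.

(* tau_mass lam a b m : the signed measure
     tau_lam = (1 - 1/lam) arcsine(dx) + (1/lam) (delta_{-2} + delta_2)/2
   gives mass m to the closed interval [a,b]. *)
Definition tau_mass (lam a b m : R) : Prop :=
  exists I, ImproperInt arcsine_dens (Rmax a (-2)) (Rmin b 2) I /\
    m = (1 - / lam) * I + / lam * ((ind_in a b (-2) + ind_in a b 2) / 2).

(* tau_lam is a (positive) measure: nonnegative on every closed interval.
   For a signed Borel measure of this form this is equivalent to positivity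
   on all Borel sets. *)
Definition tau_nonneg (lam : R) : Prop :=
  forall a b m, a <= b -> tau_mass lam a b m -> 0 <= m.

(* Throughout, z > 2 is written z = u + 1/u with u = G z in (0,1).
   - A small calculus toolkit: primitives via a total Riemann integral RI, one-sided
     limits, and improper integrals evaluated from a primitive with one-sided limits.
   - The arcsine law, through the substitution x = 2 cos t: its masses of intervals,
     total mass 1, positivity; this gives the total mass of tau_lam and the criterion
     "tau_lam >= 0 iff lam >= 1" (for lam < 1 the interval [0,1] has negative mass).
   - Its logarithmic potential: int_0^PI ln (1 - 2 v cos t + v^2) dt = 0 for |v| < 1
     (doubling relation plus boundedness), hence int ln (z - x) arcsine(dx) = - ln u,
     which is the exponential formula for G(z)^(lam-1) / sqrt (z^2 - 4).
   - The main integral: y = (x - 2u) / sqrt (1 + u^2 - u x) maps (-2,2) onto itself and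
     turns the integrand into u^lam / (1 - u^2) times (4 - y^2)^(lam - 3/2) plus two odd
     terms; these integrate to 0 by parity, leaving C_lam u^lam / (1 - u^2). *)

From Stdlib Require Import Reals Lra Psatz Classical ClassicalEpsilon.
Open Scope R_scope.

Lemma dlim_eq f x l1 l2 : derivable_pt_lim f x l1 -> l1 = l2 -> derivable_pt_lim f x l2.
Proof. intros H ->; exact H. Qed.

Lemma dlim_cont f x l : derivable_pt_lim f x l -> continuity_pt f x.
Proof. intro H. apply derivable_continuous_pt. exists l; exact H. Qed.

Lemma dlim_loc f g x l r : 0 < r -> (forall t, Rabs (t - x) < r -> f t = g t) ->
  derivable_pt_lim f x l -> derivable_pt_lim g x l.
Proof.
  intros Hr Heq H eps Heps. destruct (H eps Heps) as [d Hd].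
  assert (Hd' : 0 < Rmin d r) by (apply Rmin_pos; [apply cond_pos|lra]).
  exists (mkposreal _ Hd'). intros h Hh0 Hh. simpl in Hh.
  assert (Hm1 := Rmin_l d r); assert (Hm2 := Rmin_r d r).
  rewrite <- (Heq (x+h)), <- (Heq x).
  - apply Hd; auto; lra.
  - rewrite Rminus_diag, Rabs_R0; lra.
  - replace (x + h - x) with h by ring; lra.
Qed.

Lemma dlim_ext f g x l : (forall t, f t = g t) -> derivable_pt_lim f x l -> derivable_pt_lim g x l.
Proof. intros H. apply dlim_loc with (r := 1); [lra|]. intros; apply H. Qed.

Lemma cont_loc f g x r : 0 < r -> (forall t, Rabs (t - x) < r -> f t = g t) ->
  continuity_pt f x -> continuity_pt g x.
Proof.
  intros Hr He Hc eps Heps. destruct (Hc eps Heps) as [d [Hd H1]].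
  exists (Rmin d r); split; [apply Rmin_pos; lra|].
  intros y [_ Hy]. simpl in Hy; unfold R_dist in Hy.
  assert (Hm1 := Rmin_l d r); assert (Hm2 := Rmin_r d r).
  rewrite <- !He by (try rewrite Rminus_diag, Rabs_R0; lra).
  destruct (Req_dec y x) as [->|Hne]; [simpl; unfold R_dist; rewrite Rminus_diag, Rabs_R0; lra|].
  apply H1. split; [split; [exact I|auto]|]. simpl; unfold R_dist; lra.
Qed.

Lemma dlim_affine k m x : derivable_pt_lim (fun t => k * t + m) x k.
Proof.
  intros eps Heps. exists (mkposreal 1 Rlt_0_1). intros h Hh _.
  replace ((k * (x + h) + m - (k * x + m)) / h - k) with 0 by (field; auto).
  rewrite Rabs_R0; lra.
Qed.

Lemma same_derivative_const F G f a b :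
  (forall t, a < t < b -> derivable_pt_lim F t (f t)) ->
  (forall t, a < t < b -> derivable_pt_lim G t (f t)) ->
  forall x y, a < x < b -> a < y < b -> F x - G x = F y - G y.
Proof.
  intros HF HG.
  assert (K : forall x y, a < x < b -> a < y < b -> x < y -> F x - G x = F y - G y).
  { intros x y Hx Hy Hxy.
    destruct (MVT_cor2 (fun t => F t - G t) (fun _ => 0) x y Hxy) as [c [Hc _]].
    - intros c Hc. apply dlim_eq with (f c - f c); [|ring].
      exact (derivable_pt_lim_minus F G c _ _ (HF c ltac:(lra)) (HG c ltac:(lra))).
    - lra. }
  intros x y Hx Hy. destruct (Rtotal_order x y) as [H|[H|H]].
  - auto.
  - subst; auto.
  - symmetry; auto.
Qed.

Lemma nondecreasing_of_deriv F f c b :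
  (forall x, c <= x < b -> derivable_pt_lim F x (f x) /\ 0 <= f x) ->
  forall s t, c <= s <= t -> t < b -> F s <= F t.
Proof.
  intros H s t Hs Ht. destruct (Req_dec s t) as [->|Hne]; [lra|].
  assert (Hd : forall x, s <= x <= t -> derivable_pt_lim F x (f x)) by (intros x Hx; apply H; lra).
  destruct (MVT_cor2 F f s t ltac:(lra) Hd) as [x [Hx1 Hx2]].
  assert (0 <= f x) by (apply H; lra). nra.
Qed.

(* The oriented Riemann integral of f from a to b, set to 0 when f is not integrable;
   it lets us speak of primitives t |-> RI f c t without carrying proofs. *)
Definition RI (f : R -> R) (a b : R) : R :=
  match excluded_middle_informative (exists pr : Riemann_integrable f a b, True) with
  | left H => RiemannInt (proj1_sig (constructive_indefinite_description _ H))
  | right _ => 0 end.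

Lemma RI_eq f a b (pr : Riemann_integrable f a b) : RI f a b = RiemannInt pr.
Proof.
  unfold RI. destruct excluded_middle_informative as [H|H].
  - apply RiemannInt_P5.
  - exfalso; apply H; exists pr; trivial.
Qed.

Lemma RI_same f a : RI f a a = 0.
Proof. rewrite (RI_eq _ _ _ (RiemannInt_P7 f a)). apply RiemannInt_P9. Qed.

Lemma ftc f F a b : a <= b -> (forall t, a <= t <= b -> derivable_pt_lim F t (f t)) ->
  (forall t, a <= t <= b -> continuity_pt f t) ->
  forall pr : Riemann_integrable f a b, RiemannInt pr = F b - F a.
Proof.
  intros Hab HF Hc pr.
  rewrite (RiemannInt_P20 Hab (FTC_P1 Hab Hc) pr).
  destruct (antiderivative_Ucte f _ F a b (RiemannInt_P29 Hab Hc)) as [C HC].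
  - split; [|exact Hab]. intros x Hx. exists (exist _ (f x) (HF x Hx)).
    symmetry. apply derive_pt_eq_0. apply HF; auto.
  - rewrite !HC; [ring| lra | lra].
Qed.

Lemma RI_ftc f F a b :
  (forall t, Rmin a b <= t <= Rmax a b -> derivable_pt_lim F t (f t)) ->
  (forall t, Rmin a b <= t <= Rmax a b -> continuity_pt f t) -> RI f a b = F b - F a.
Proof.
  intros HF Hc. destruct (Rle_dec a b) as [Hab|Hab].
  - rewrite Rmin_left, Rmax_right in HF, Hc by lra.
    rewrite (RI_eq _ _ _ (continuity_implies_RiemannInt Hab Hc)). apply ftc; auto.
  - rewrite Rmin_right, Rmax_left in HF, Hc by lra.
    assert (Hba : b <= a) by lra.
    set (pr := continuity_implies_RiemannInt Hba Hc).
    rewrite (RI_eq _ _ _ (RiemannInt_P1 pr)), (RiemannInt_P8 (RiemannInt_P1 pr) pr).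
    rewrite (ftc f F b a Hba HF Hc). ring.
Qed.

Lemma RI_primitive f a b c : (forall t, a < t < b -> continuity_pt f t) -> a < c < b ->
  forall x, a < x < b -> derivable_pt_lim (fun t => RI f c t) x (f x).
Proof.
  intros Hf Hc x Hx.
  set (a' := (a + Rmin c x) / 2). set (b' := (b + Rmax c x) / 2).
  assert (H1 := Rmin_l c x); assert (H2 := Rmin_r c x).
  assert (H3 := Rmax_l c x); assert (H4 := Rmax_r c x).
  assert (H5 : a < Rmin c x) by (unfold Rmin; destruct Rle_dec; lra).
  assert (H6 : Rmax c x < b) by (unfold Rmax; destruct Rle_dec; lra).
  assert (Hab : a' <= b') by (unfold a', b'; lra).
  assert (Hc' : forall t, a' <= t <= b' -> continuity_pt f t)
    by (intros t Ht; apply Hf; unfold a', b' in Ht; lra).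
  set (P := primitive Hab (FTC_P1 Hab Hc')).
  apply dlim_loc with (f := fun t => P t - P c) (r := Rmin (x - a') (b' - x)).
  - apply Rmin_pos; unfold a', b'; lra.
  - intros t Ht. assert (Hm1 := Rmin_l (x - a') (b' - x)); assert (Hm2 := Rmin_r (x - a') (b' - x)).
    apply Rabs_def2 in Ht.
    assert (Hmin : a' < Rmin c t) by (unfold Rmin; destruct Rle_dec; unfold a', b' in *; lra).
    assert (Hmax : Rmax c t < b') by (unfold Rmax; destruct Rle_dec; unfold a', b' in *; lra).
    symmetry. apply RI_ftc.
    + intros s Hs. apply RiemannInt_P28. lra.
    + intros s Hs. apply Hc'. lra.
  - assert (Hxx : a' <= x <= b') by (unfold a', b'; lra).
    apply dlim_eq with (f x - 0); [|ring].
    exact (derivable_pt_lim_minus P (fct_cte (P c)) x _ _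
             (RiemannInt_P28 Hab Hc' Hxx) (derivable_pt_lim_const (P c) x)).
Qed.

Lemma RI_primitive_global f : (forall t, continuity_pt f t) ->
  forall x, derivable_pt_lim (fun t => RI f 0 t) x (f x).
Proof.
  intros Hf x. assert (Hx := Rle_abs x). assert (Hx' := Rle_abs (- x)). rewrite Rabs_Ropp in Hx'.
  apply RI_primitive with (a := - (Rabs x + 1)) (b := Rabs x + 1); [intros; apply Hf|lra|lra].
Qed.

(* One-sided limits.  The right limit at a is the left limit at -a of the
   reflected function, so every statement about right limits reduces to one
   about left limits. *)
Definition limL (F : R -> R) (b L : R) : Prop := forall eps, 0 < eps ->
  exists d, 0 < d /\ forall t, b - d < t < b -> Rabs (F t - L) < eps.

Definition limR (F : R -> R) (a L : R) : Prop := limL (fun t => F (- t)) (- a) L.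

Lemma limL_plus F G b L1 L2 : limL F b L1 -> limL G b L2 -> limL (fun t => F t + G t) b (L1 + L2).
Proof.
  intros H1 H2 eps Heps. destruct (H1 (eps/2)) as [d1 [Hd1 K1]]; [lra|].
  destruct (H2 (eps/2)) as [d2 [Hd2 K2]]; [lra|].
  exists (Rmin d1 d2); split; [apply Rmin_pos; lra|].
  intros t Ht. assert (Hm1 := Rmin_l d1 d2); assert (Hm2 := Rmin_r d1 d2).
  assert (E1 := K1 t ltac:(lra)); assert (E2 := K2 t ltac:(lra)).
  apply Rabs_def2 in E1; apply Rabs_def2 in E2; apply Rabs_def1; lra.
Qed.

Lemma limL_ext F G b L r : 0 < r -> (forall t, b - r < t < b -> F t = G t) ->
  limL F b L -> limL G b L.
Proof.
  intros Hr He H eps Heps. destruct (H eps Heps) as [d [Hd K]].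
  exists (Rmin d r); split; [apply Rmin_pos; lra|]. intros t Ht.
  assert (Hm1 := Rmin_l d r); assert (Hm2 := Rmin_r d r).
  rewrite <- He by lra. apply K; lra.
Qed.

Lemma limL_comp H psi b b' L : limL H b' L ->
  (forall eps, 0 < eps -> exists d, 0 < d /\ forall t, b - d < t < b -> b' - eps < psi t < b') ->
  limL (fun t => H (psi t)) b L.
Proof.
  intros HH Hp eps Heps. destruct (HH eps Heps) as [d [Hd K]].
  destruct (Hp d Hd) as [d' [Hd' K']]. exists d'; split; [exact Hd'|].
  intros t Ht. apply K. apply K'. auto.
Qed.

Lemma limL_contcomp Phi g b L : continuity_pt Phi L -> limL g b L ->
  limL (fun t => Phi (g t)) b (Phi L).
Proof.
  intros HP Hg eps Heps. destruct (HP eps Heps) as [d [Hd H1]].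
  destruct (Hg d Hd) as [d' [Hd' H2]]. exists d'; split; [exact Hd'|]. intros t Ht.
  destruct (Req_dec (g t) L) as [E|E].
  - rewrite E, Rminus_diag, Rabs_R0; lra.
  - apply (H1 (g t)). split; [split; [exact I|auto]|]. apply H2; auto.
Qed.

Lemma limL_scal F b L k : limL F b L -> limL (fun t => k * F t) b (k * L).
Proof.
  apply (limL_contcomp (fun y => k * y)).
  apply derivable_continuous_pt. exists k. apply dlim_eq with (k * 1); [|ring].
  apply derivable_pt_lim_scal, derivable_pt_lim_id.
Qed.

Lemma limL_affine k m b : limL (fun t => k * t + m) b (k * b + m).
Proof.
  intros eps Heps. destruct (dlim_cont _ _ _ (dlim_affine k m b) eps Heps) as [d [Hd H]].
  exists d; split; [exact Hd|]. intros t Ht.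
  destruct (Req_dec t b) as [->|Hne]; [lra|].
  apply (H t). split; [split; [exact I|auto]|]. simpl; unfold R_dist. apply Rabs_def1; lra.
Qed.

Lemma cont_limL F b : continuity_pt F b -> limL F b (F b).
Proof.
  intros H. assert (L := limL_affine 1 0 b). replace (1 * b + 0) with b in L by ring.
  apply limL_ext with (fun t => F (1 * t + 0)) 1; [lra|intros; f_equal; ring|].
  exact (limL_contcomp F _ b b H L).
Qed.

Lemma cont_limR F a : continuity_pt F a -> limR F a (F a).
Proof.
  intros H. assert (L := limL_affine (-1) 0 (- a)). replace (-1 * - a + 0) with a in L by ring.
  apply limL_ext with (fun t => F (-1 * t + 0)) 1; [lra|intros; f_equal; ring|].
  exact (limL_contcomp F _ (- a) a H L).
Qed.

Lemma limR_comp H psi a a' L : limR H a' L ->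
  (forall eps, 0 < eps -> exists d, 0 < d /\ forall t, a < t < a + d -> a' < psi t < a' + eps) ->
  limR (fun t => H (psi t)) a L.
Proof.
  intros HH Hp. unfold limR.
  apply limL_ext with (fun t => H (- (- psi (- t)))) 1; [lra|intros; f_equal; ring|].
  apply (limL_comp (fun s => H (- s)) (fun t => - psi (- t)) (- a) (- a') L HH).
  intros eps Heps. destruct (Hp eps Heps) as [d [Hd K]]. exists d; split; [exact Hd|].
  intros t Ht. assert (E := K (- t) ltac:(lra)). lra.
Qed.

Lemma limL_comp_cont H psi b L r : 0 < r -> continuity_pt psi b ->
  (forall t, b - r < t < b -> psi t < psi b) -> limL H (psi b) L -> limL (fun t => H (psi t)) b L.
Proof.
  intros Hr Hc Hlt HH. apply (limL_comp H psi b (psi b) L HH).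
  intros eps Heps. destruct (cont_limL psi b Hc eps Heps) as [d [Hd K]].
  exists (Rmin d r). split; [apply Rmin_pos; lra|]. intros t Ht.
  assert (Hm1 := Rmin_l d r); assert (Hm2 := Rmin_r d r).
  assert (E := K t ltac:(lra)). apply Rabs_def2 in E. assert (E2 := Hlt t ltac:(lra)). lra.
Qed.

Lemma limR_comp_cont H psi a L r : 0 < r -> continuity_pt psi a ->
  (forall t, a < t < a + r -> psi a < psi t) -> limR H (psi a) L -> limR (fun t => H (psi t)) a L.
Proof.
  intros Hr Hc Hgt HH. apply (limR_comp H psi a (psi a) L HH).
  intros eps Heps. destruct (cont_limR psi a Hc eps Heps) as [d [Hd K]].
  exists (Rmin d r). split; [apply Rmin_pos; lra|]. intros t Ht.
  assert (Hm1 := Rmin_l d r); assert (Hm2 := Rmin_r d r).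
  assert (E := K (- t) ltac:(lra)). rewrite Ropp_involutive in E. apply Rabs_def2 in E.
  assert (E2 := Hgt t ltac:(lra)). lra.
Qed.

Lemma nondecreasing_limL F c b M : c < b -> (forall s t, c <= s <= t -> t < b -> F s <= F t) ->
  (forall t, c <= t < b -> F t <= M) -> exists L, limL F b L.
Proof.
  intros Hcb Hinc Hb.
  set (E := fun y => exists t, c <= t < b /\ y = F t).
  destruct (completeness E) as [L [HL1 HL2]].
  - exists M. intros y [t [Ht ->]]. auto.
  - exists (F c). exists c. split; [lra|auto].
  - exists L. intros eps Heps.
    assert (Hex : exists t0, c <= t0 < b /\ L - eps < F t0).
    { apply NNPP. intro Hn. assert (L <= L - eps); [|lra].
      apply HL2. intros y [t [Ht ->]].
      destruct (Rle_dec (F t) (L - eps)) as [h|h]; [exact h|].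
      exfalso; apply Hn; exists t; split; [auto|lra]. }
    destruct Hex as [t0 [Ht0 Hf0]].
    exists (b - t0). split; [lra|]. intros t Ht.
    assert (F t0 <= F t) by (apply Hinc; lra).
    assert (F t <= L) by (apply HL1; exists t; split; [lra|auto]).
    apply Rabs_def1; lra.
Qed.

Lemma dominated_limL F f G g c b M : c < b ->
  (forall x, c <= x < b -> derivable_pt_lim F x (f x)) ->
  (forall x, c <= x < b -> derivable_pt_lim G x (g x)) ->
  (forall x, c <= x < b -> 0 <= f x <= g x) ->
  (forall t, c <= t < b -> G t <= M) -> exists L, limL F b L.
Proof.
  intros Hcb HF HG Hfg HM.
  apply (nondecreasing_limL F c b (M - G c + F c) Hcb).
  - apply nondecreasing_of_deriv with f. intros x Hx. split; [auto|apply Hfg; auto].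
  - intros t Ht.
    assert (K : G c - F c <= G t - F t).
    { apply (nondecreasing_of_deriv (fun t => G t - F t) (fun t => g t - f t) c b); [|lra|lra].
      intros x Hx. split; [exact (derivable_pt_lim_minus G F x _ _ (HG x Hx) (HF x Hx))|].
      assert (E := Hfg x Hx). lra. }
    assert (E := HM t Ht). lra.
Qed.

Lemma improper_of_prim f F a b La Lb : a < b ->
  (forall t, a < t < b -> derivable_pt_lim F t (f t)) ->
  (forall t, a < t < b -> continuity_pt f t) ->
  limR F a La -> limL F b Lb -> ImproperInt f a b (Lb - La).
Proof.
  intros Hab HF Hc HA HB. left. split; [exact Hab|]. intros eps Heps.
  destruct (HA (eps/2)) as [d1 [Hd1 H1]]; [lra|].
  destruct (HB (eps/2)) as [d2 [Hd2 H2]]; [lra|].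
  exists (Rmin d1 d2). split; [apply Rmin_pos; lra|].
  intros a' b' Ha' Hb' Hab'.
  assert (Hm1 := Rmin_l d1 d2); assert (Hm2 := Rmin_r d1 d2).
  assert (Hle : a' <= b') by lra.
  exists (continuity_implies_RiemannInt Hle (fun t Ht => Hc t ltac:(lra))).
  rewrite (ftc f F a' b' Hle).
  - assert (E1 := H1 (- a') ltac:(lra)). assert (E2 := H2 b' ltac:(lra)).
    rewrite Ropp_involutive in E1.
    apply Rabs_def2 in E1; apply Rabs_def2 in E2. apply Rabs_def1; lra.
  - intros t Ht; apply HF; lra.
  - intros t Ht; apply Hc; lra.
Qed.

Lemma improper_nonneg f a b I : (forall x, a < x < b -> 0 <= f x) -> ImproperInt f a b I -> 0 <= I.
Proof.
  intros Hf [[Hab H]|[_ ->]]; [|lra].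
  destruct (Rle_dec 0 I) as [h|h]; [exact h|exfalso].
  destruct (H (- I) ltac:(lra)) as [d [Hd K]].
  set (m := Rmin d (b - a)). assert (Hm : 0 < m) by (apply Rmin_pos; lra).
  assert (Hm1 : m <= d) by apply Rmin_l. assert (Hm2 : m <= b - a) by apply Rmin_r.
  destruct (K (a + m/3) (b - m/3) ltac:(lra) ltac:(lra) ltac:(lra)) as [pr Hpr].
  assert (Hle : a + m/3 <= b - m/3) by lra.
  assert (H0 := RiemannInt_P19 (RiemannInt_P14 (a + m/3) (b - m/3) 0) pr Hle).
  rewrite RiemannInt_P15 in H0.
  assert (0 * (b - m / 3 - (a + m / 3)) <= RiemannInt pr).
  { apply H0. intros x Hx. unfold fct_cte. apply Hf. lra. }
  apply Rabs_def2 in Hpr. lra.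
Qed.

(* The arcsine law, through the substitution x = 2 cos theta. *)

Lemma sqrt4_pos x : -2 < x < 2 -> 0 < sqrt (4 - x ^ 2).
Proof. intros. apply sqrt_lt_R0. nra. Qed.

Lemma acos_half_deriv x : -2 < x < 2 ->
  derivable_pt_lim (fun t => acos (t / 2)) x (-1 / sqrt (4 - x ^ 2)).
Proof.
  intros Hx.
  assert (H1 := derive_pt_eq_1 _ _ _ _ (derive_pt_acos (/ 2 * x + 0) ltac:(lra))).
  assert (H := derivable_pt_lim_comp (fun t => / 2 * t + 0) acos x _ _ (dlim_affine _ _ x) H1).
  apply dlim_ext with (f := comp acos (fun t => / 2 * t + 0)).
  { intro t. unfold comp. f_equal. field. }
  apply (dlim_eq _ _ _ _ H).
  replace (4 - x ^ 2) with ((2 * 2) * (1 - Rsqr (/ 2 * x + 0))) by (unfold Rsqr; field).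
  assert (0 < 1 - Rsqr (/ 2 * x + 0)) by (unfold Rsqr; nra).
  rewrite sqrt_mult, sqrt_square by lra. assert (0 < sqrt (1 - Rsqr (/ 2 * x + 0))) by (apply sqrt_lt_R0; lra).
  field. lra.
Qed.

Lemma acos_lt_of_cos_lt x e : 0 < e <= PI -> x <= 1 -> cos e < x -> acos x < e.
Proof.
  intros He Hx Hc. assert (B := acos_bound x). assert (Ce := COS_bound e).
  destruct (Rlt_le_dec (acos x) e) as [h|h]; [exact h|exfalso].
  assert (cos (acos x) <= cos e).
  { destruct (Req_dec (acos x) e) as [<-|Hne]; [lra|].
    left. apply cos_decreasing_1; lra. }
  rewrite cos_acos in H by lra. lra.
Qed.

Lemma acos_limL b : -2 < b <= 2 -> limL (fun x => acos (x / 2)) b (acos (b / 2)).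
Proof.
  intros Hb. destruct (Req_dec b 2) as [->|Hne].
  - replace (2 / 2) with 1 by field. rewrite acos_1.
    intros eps Heps. assert (HPI := PI_RGT_0). set (e := Rmin eps (PI / 2)).
    assert (He : 0 < e) by (apply Rmin_pos; lra).
    assert (He1 : e <= eps) by apply Rmin_l. assert (He2 : e <= PI / 2) by apply Rmin_r.
    assert (Hce : cos e < 1) by (rewrite <- cos_0; apply cos_decreasing_1; lra).
    exists (2 - 2 * cos e). split; [lra|]. intros t Ht.
    assert (Hb0 := acos_bound (t / 2)).
    assert (acos (t / 2) < e) by (apply acos_lt_of_cos_lt; lra).
    rewrite Rminus_0_r, Rabs_right; lra.
  - exact (cont_limL _ b (dlim_cont _ _ _ (acos_half_deriv b ltac:(lra)))).
Qed.

(* At the left end we use the symmetry acos (- y) = PI - acos y. *)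
Lemma acos_limR a : -2 <= a < 2 -> limR (fun x => acos (x / 2)) a (acos (a / 2)).
Proof.
  intros Ha. unfold limR.
  assert (E : forall t, acos (- t / 2) = -1 * acos (t / 2) + PI).
  { intro t. replace (- t / 2) with (- (t / 2)) by field. rewrite acos_opp. ring. }
  apply limL_ext with (fun t => -1 * acos (t / 2) + PI) 1; [lra|intros; rewrite E; reflexivity|].
  rewrite <- (Ropp_involutive a) at 2. rewrite E.
  apply (limL_contcomp (fun y => -1 * y + PI)); [exact (dlim_cont _ _ _ (dlim_affine _ _ _))|].
  apply acos_limL. lra.
Qed.

Lemma arcsine_dens_cont x : -2 < x < 2 -> continuity_pt arcsine_dens x.
Proof.
  intros Hx. unfold arcsine_dens. assert (Hs := sqrt4_pos x Hx). assert (HPI := PI_RGT_0).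
  apply continuity_pt_inv; [|nra].
  apply continuity_pt_mult; [apply continuity_pt_const; intros u v; reflexivity|].
  apply (continuity_pt_comp (fun x => 4 - x ^ 2) sqrt).
  - apply derivable_continuous_pt, derivable_pt_minus; [apply derivable_pt_const|apply derivable_pt_pow].
  - apply continuity_pt_sqrt. nra.
Qed.

Lemma arcsine_dens_pos x : -2 < x < 2 -> 0 < arcsine_dens x.
Proof.
  intros Hx. unfold arcsine_dens. apply Rinv_0_lt_compat.
  apply Rmult_lt_0_compat; [apply PI_RGT_0|apply sqrt4_pos; lra].
Qed.

Lemma arcsine_substitution (h Phi f : R -> R) a b : -2 <= a -> a < b -> b <= 2 ->
  (forall t, derivable_pt_lim Phi t (h t)) -> (forall t, continuity_pt h t) ->
  (forall x, a < x < b -> f x = h (acos (x / 2)) * arcsine_dens x) ->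
  ImproperInt f a b ((Phi (acos (a / 2)) - Phi (acos (b / 2))) / PI).
Proof.
  intros Ha Hab Hb HP Hh Hf. assert (HPI := PI_RGT_0).
  replace ((Phi (acos (a / 2)) - Phi (acos (b / 2))) / PI)
    with (- / PI * Phi (acos (b / 2)) - - / PI * Phi (acos (a / 2))) by (field; lra).
  apply improper_of_prim with (F := fun x => - / PI * Phi (acos (x / 2))); [exact Hab| | | |].
  - intros t Ht. rewrite Hf by lra.
    apply dlim_eq with (- / PI * (h (acos (t / 2)) * (-1 / sqrt (4 - t ^ 2)))).
    + apply (derivable_pt_lim_scal (fun x => Phi (acos (x / 2)))).
      exact (derivable_pt_lim_comp _ Phi _ _ _ (acos_half_deriv t ltac:(lra)) (HP _)).
    + unfold arcsine_dens. assert (H := sqrt4_pos t ltac:(lra)). field. lra.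
  - intros t Ht. apply cont_loc with (fun x => h (acos (x / 2)) * arcsine_dens x) (Rmin (t - a) (b - t)).
    + apply Rmin_pos; lra.
    + intros x Hx. assert (Hm1 := Rmin_l (t - a) (b - t)); assert (Hm2 := Rmin_r (t - a) (b - t)).
      apply Rabs_def2 in Hx. rewrite Hf by lra. reflexivity.
    + apply continuity_pt_mult; [|apply arcsine_dens_cont; lra].
      apply (continuity_pt_comp (fun x => acos (x / 2)) h); [|apply Hh].
      exact (dlim_cont _ _ _ (acos_half_deriv t ltac:(lra))).
  - apply (limL_contcomp (fun y => - / PI * Phi y)).
    + exact (dlim_cont _ _ _ (derivable_pt_lim_scal _ _ _ _ (HP _))).
    + apply acos_limR. lra.
  - apply (limL_contcomp (fun y => - / PI * Phi y)).
    + exact (dlim_cont _ _ _ (derivable_pt_lim_scal _ _ _ _ (HP _))).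
    + apply acos_limL. lra.
Qed.

Lemma arcsine_mass a b : -2 <= a -> a < b -> b <= 2 ->
  ImproperInt arcsine_dens a b ((acos (a / 2) - acos (b / 2)) / PI).
Proof.
  intros Ha Hab Hb.
  exact (arcsine_substitution (fun _ => 1) (fun t => t) arcsine_dens a b Ha Hab Hb
    (fun t => derivable_pt_lim_id t) (fun t => continuity_pt_const (fun _ : R => 1) t (fun _ _ => eq_refl))
    (fun x _ => eq_sym (Rmult_1_l _))).
Qed.

Lemma acos_at_m2 : acos (-2 / 2) = PI.
Proof. replace (-2 / 2) with (Ropp 1) by field. rewrite acos_opp, acos_1. ring. Qed.

Lemma acos_at_2 : acos (2 / 2) = 0.
Proof. replace (2 / 2) with 1 by field. apply acos_1. Qed.

Lemma arcsine_total : ImproperInt arcsine_dens (-2) 2 1.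
Proof.
  assert (H := arcsine_mass (-2) 2 ltac:(lra) ltac:(lra) ltac:(lra)).
  rewrite acos_at_m2, acos_at_2 in H. replace ((PI - 0) / PI) with 1 in H; [exact H|].
  assert (HPI := PI_RGT_0). field. lra.
Qed.

Lemma ind_in_nonneg a b p : 0 <= ind_in a b p.
Proof. unfold ind_in. repeat destruct Rle_dec; lra. Qed.

Lemma ind_in_inside a b p : a <= p <= b -> ind_in a b p = 1.
Proof. intros H. unfold ind_in. repeat destruct Rle_dec; lra. Qed.

Lemma ind_in_outside a b p : ~ a <= p <= b -> ind_in a b p = 0.
Proof. intros H. unfold ind_in. repeat destruct Rle_dec; tauto. Qed.

(* tau_lam has total mass 1: the arcsine law and the two half atoms are probabilities. *)
Lemma tau_total_mass lam : 0 < lam -> forall a b, a <= -2 -> 2 <= b -> tau_mass lam a b 1.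
Proof.
  intros Hl a b Ha Hb. exists 1. split.
  - rewrite Rmax_right, Rmin_right by lra. exact arcsine_total.
  - rewrite !ind_in_inside by lra. field. lra.
Qed.

Lemma arcsine_mass_0_1 : ImproperInt arcsine_dens 0 1 (/ 6).
Proof.
  assert (H := arcsine_mass 0 1 ltac:(lra) ltac:(lra) ltac:(lra)).
  replace (0 / 2) with 0 in H by field. replace (1 / 2) with (cos (PI / 3)) in H by apply cos_PI3.
  assert (HPI := PI_RGT_0). rewrite acos_0, acos_cos in H by lra.
  replace ((PI / 2 - PI / 3) / PI) with (/ 6) in H by (field; lra). exact H.
Qed.

(* tau_lam is a positive measure exactly when its arcsine part has a nonnegative
   weight 1 - 1/lam; for lam < 1 the interval [0,1], which avoids the atoms, has
   negative mass. *)
Lemma tau_nonneg_iff lam : 0 < lam -> (tau_nonneg lam <-> 1 <= lam).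
Proof.
  intros Hl. assert (Hinv : 0 < / lam) by (apply Rinv_0_lt_compat; lra). split.
  - intros H. destruct (Rle_dec 1 lam) as [h|h]; [exact h|exfalso].
    assert (Hinv1 : 1 < / lam) by (rewrite <- Rinv_1; apply Rinv_lt_contravar; lra).
    assert (Hm : 0 <= (1 - / lam) * / 6).
    { apply (H 0 1); [lra|]. exists (/ 6). split.
      - rewrite Rmax_left, Rmin_left by lra. exact arcsine_mass_0_1.
      - rewrite !ind_in_outside by lra. field. lra. }
    lra.
  - intros H1 a b m Hab [I [HI ->]].
    assert (HI0 : 0 <= I).
    { apply (improper_nonneg arcsine_dens (Rmax a (-2)) (Rmin b 2)); [|exact HI].
      intros x Hx. assert (Hm1 := Rmax_r a (-2)). assert (Hm2 := Rmin_r b 2).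
      left. apply arcsine_dens_pos. lra. }
    assert (Hinv1 : / lam <= 1) by (rewrite <- Rinv_1; apply Rinv_le_contravar; lra).
    assert (E1 := ind_in_nonneg a b (-2)). assert (E2 := ind_in_nonneg a b 2).
    apply Rplus_le_le_0_compat; apply Rmult_le_pos; lra.
Qed.

(* Under x = 2 cos t and
   z = u + 1/u one has z - x = (1 - 2 u cos t + u^2) / u, so everything rests on
   the classical identity  int_0^PI ln (1 - 2 v cos t + v^2) dt = 0  for |v| < 1,
   which follows from the doubling relation J (v^2) = 2 J v and boundedness. *)

Definition log_kernel (v t : R) : R := ln (1 - 2 * v * cos t + v ^ 2).

Lemma log_kernel_arg v t : Rabs v < 1 ->
  (1 - Rabs v) ^ 2 <= 1 - 2 * v * cos t + v ^ 2 <= (1 + Rabs v) ^ 2.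
Proof.
  intros Hv. assert (Hc := COS_bound t).
  destruct (Rcase_abs v) as [h|h]; [rewrite Rabs_left by lra|rewrite Rabs_right by lra]; split; nra.
Qed.

Lemma log_kernel_arg_pos v t : Rabs v < 1 -> 0 < 1 - 2 * v * cos t + v ^ 2.
Proof.
  intros Hv. assert (H := log_kernel_arg v t Hv). assert (0 < (1 - Rabs v) ^ 2) by (apply pow_lt; lra).
  lra.
Qed.

Lemma log_kernel_cont v : Rabs v < 1 -> forall t, continuity_pt (log_kernel v) t.
Proof.
  intros Hv t. unfold log_kernel.
  apply (cont_loc (comp ln (fun t => 1 - 2 * v * cos t + v ^ 2))) with 1; [lra|reflexivity|].
  apply continuity_pt_comp.
  - apply continuity_pt_plus; [|apply continuity_pt_const; intros a b; reflexivity].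
    apply continuity_pt_minus; [apply continuity_pt_const; intros a b; reflexivity|].
    apply continuity_pt_mult; [apply continuity_pt_const; intros a b; reflexivity|].
    apply derivable_continuous_pt, derivable_pt_cos.
  - exact (dlim_cont _ _ _ (derivable_pt_lim_ln _ (log_kernel_arg_pos v t Hv))).
Qed.

Definition log_prim (v t : R) : R := RI (log_kernel v) 0 t.
Definition J (v : R) : R := log_prim v PI.

Lemma log_prim_deriv v : Rabs v < 1 -> forall t, derivable_pt_lim (log_prim v) t (log_kernel v t).
Proof. intros Hv. apply RI_primitive_global, log_kernel_cont, Hv. Qed.

Lemma primitive_reflect P1 h1 P2 h2 c :
  (forall t, derivable_pt_lim P1 t (h1 t)) -> (forall t, derivable_pt_lim P2 t (h2 t)) ->
  (forall t, h2 (c - t) = h1 t) ->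
  forall x y, P1 y - P1 x = P2 (c - x) - P2 (c - y).
Proof.
  intros H1 H2 Hh x y.
  assert (D : forall t, derivable_pt_lim (fun t => - P2 (-1 * t + c)) t (h1 t)).
  { intro t. apply dlim_eq with (- (h2 (-1 * t + c) * -1)).
    - apply derivable_pt_lim_opp.
      exact (derivable_pt_lim_comp _ P2 t _ _ (dlim_affine (-1) c t) (H2 _)).
    - replace (-1 * t + c) with (c - t) by ring. rewrite Hh. ring. }
  assert (K := same_derivative_const P1 _ h1 (- Rabs x - Rabs y - 1) (Rabs x + Rabs y + 1)
    (fun t _ => H1 t) (fun t _ => D t) x y).
  assert (Ex := Rle_abs x). assert (Ex' := Rle_abs (- x)). assert (Ey := Rle_abs y).
  assert (Ey' := Rle_abs (- y)). rewrite Rabs_Ropp in Ex', Ey'.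
  replace (c - x) with (-1 * x + c) by ring. replace (c - y) with (-1 * y + c) by ring.
  assert (Ay := Rabs_pos y). assert (Ax := Rabs_pos x). specialize (K ltac:(lra) ltac:(lra)). lra.
Qed.

(* Symmetries t |-> PI - t and t |-> 2 PI - t of the kernel. *)
Lemma J_opp v : Rabs v < 1 -> J (- v) = J v.
Proof.
  intros Hv. assert (Hv' : Rabs (- v) < 1) by (rewrite Rabs_Ropp; auto).
  assert (K := primitive_reflect (log_prim (- v)) (log_kernel (- v)) (log_prim v) (log_kernel v) PI
    (log_prim_deriv _ Hv') (log_prim_deriv _ Hv) ltac:(intro t; unfold log_kernel;
      rewrite cos_minus, cos_PI, sin_PI; f_equal; ring) 0 PI).
  unfold J, log_prim in *. rewrite Rminus_0_r, Rminus_diag, !RI_same in K. lra.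
Qed.

Lemma log_prim_2PI w : Rabs w < 1 -> log_prim w (2 * PI) = 2 * J w.
Proof.
  intros Hw.
  assert (K := primitive_reflect (log_prim w) (log_kernel w) (log_prim w) (log_kernel w) (2 * PI)
    (log_prim_deriv _ Hw) (log_prim_deriv _ Hw) ltac:(intro t; unfold log_kernel;
      rewrite cos_minus, cos_2PI, sin_2PI; f_equal; ring) 0 PI).
  unfold J, log_prim in *. rewrite Rminus_0_r in K.
  replace (2 * PI - PI) with PI in K by ring. rewrite RI_same in K. lra.
Qed.

(* Doubling: (1 - 2 v cos t + v^2) (1 + 2 v cos t + v^2) = 1 - 2 v^2 cos (2t) + v^4. *)
Lemma J_sq v : Rabs v < 1 -> J (v ^ 2) = 2 * J v.
Proof.
  intros Hv. assert (Hv' : Rabs (- v) < 1) by (rewrite Rabs_Ropp; auto).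
  assert (Hv2 : Rabs (v ^ 2) < 1).
  { rewrite <- RPow_abs. assert (0 <= Rabs v) by apply Rabs_pos. nra. }
  assert (D1 : forall t, derivable_pt_lim (fun t => log_prim v t + log_prim (- v) t) t
                 (log_kernel v t + log_kernel (- v) t)).
  { intro t. exact (derivable_pt_lim_plus _ _ t _ _ (log_prim_deriv v Hv t) (log_prim_deriv (- v) Hv' t)). }
  assert (D2 : forall t, derivable_pt_lim (fun t => / 2 * log_prim (v ^ 2) (2 * t + 0)) t
                 (log_kernel v t + log_kernel (- v) t)).
  { intro t. apply dlim_eq with (/ 2 * (log_kernel (v ^ 2) (2 * t + 0) * 2)).
    - apply derivable_pt_lim_scal.
      exact (derivable_pt_lim_comp _ (log_prim (v ^ 2)) t _ _ (dlim_affine 2 0 t) (log_prim_deriv _ Hv2 _)).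
    - unfold log_kernel. rewrite <- ln_mult by (apply log_kernel_arg_pos; auto).
      replace (2 * t + 0) with (2 * t) by ring. rewrite cos_2a_cos. field_simplify. f_equal. ring. }
  assert (HPI := PI_RGT_0).
  assert (K := same_derivative_const _ _ _ (- 1) (PI + 1) (fun t _ => D1 t) (fun t _ => D2 t) 0 PI
    ltac:(lra) ltac:(lra)).
  cbv beta in K. replace (2 * 0 + 0) with 0 in K by ring. replace (2 * PI + 0) with (2 * PI) in K by ring.
  rewrite log_prim_2PI in K by auto. unfold log_prim in K. rewrite !RI_same in K.
  assert (E := J_opp v Hv). unfold J, log_prim in *. lra.
Qed.

Lemma ln_le_mono x y : 0 < x -> x <= y -> ln x <= ln y.
Proof. intros Hx [H|H]; [left; apply ln_increasing; auto|subst; lra]. Qed.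

Lemma J_bound u v : 0 < u < 1 -> Rabs v <= u -> Rabs (J v) <= PI * (ln 4 - ln ((1 - u) ^ 2)).
Proof.
  intros Hu Hv. assert (Hv1 : Rabs v < 1) by lra. assert (HPI := PI_RGT_0).
  destruct (MVT_cor2 (log_prim v) (log_kernel v) 0 PI ltac:(lra) (fun c _ => log_prim_deriv v Hv1 c))
    as [c [Hc _]].
  unfold J. unfold log_prim at 2 in Hc. rewrite RI_same, !Rminus_0_r in Hc. rewrite Hc.
  rewrite Rabs_mult, (Rabs_right PI), Rmult_comm by lra. apply Rmult_le_compat_l; [lra|].
  assert (A := log_kernel_arg v c Hv1). assert (Hav := Rabs_pos v).
  assert (L1 : ln ((1 - u) ^ 2) <= log_kernel v c).
  { apply ln_le_mono; [apply pow_lt; lra|]. apply Rle_trans with ((1 - Rabs v) ^ 2); [|lra].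
    apply pow_incr; lra. }
  assert (L2 : log_kernel v c <= ln 4).
  { apply ln_le_mono; [apply log_kernel_arg_pos; auto|]. nra. }
  assert (L3 : ln ((1 - u) ^ 2) < 0) by (rewrite <- ln_1; apply ln_increasing; [apply pow_lt|]; nra).
  assert (L4 : 0 < ln 4) by (rewrite <- ln_1; apply ln_increasing; lra).
  unfold Rabs; destruct Rcase_abs; lra.
Qed.

Lemma halving_bound_zero x B : (forall n, Rabs x <= B / 2 ^ n) -> x = 0.
Proof.
  intros H. destruct (Req_dec x 0) as [h|h]; [exact h|exfalso].
  assert (Hx : 0 < Rabs x) by (apply Rabs_pos_lt; auto).
  destruct (Pow_x_infinity 2 ltac:(rewrite Rabs_right; lra) (B / Rabs x + 1)) as [N HN].
  specialize (HN N (le_n N)). specialize (H N).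
  assert (P : 0 < 2 ^ N) by (apply pow_lt; lra). rewrite Rabs_right in HN by lra.
  assert (E1 : Rabs x * 2 ^ N <= B).
  { replace B with (B / 2 ^ N * 2 ^ N) by (field; lra). apply Rmult_le_compat_r; lra. }
  assert (E2 : (B / Rabs x + 1) * Rabs x <= 2 ^ N * Rabs x) by (apply Rmult_le_compat_r; lra).
  replace ((B / Rabs x + 1) * Rabs x) with (B + Rabs x) in E2 by (field; lra). lra.
Qed.

(* J vanishes: iterating J (v^2) = 2 J v shrinks the bound of J_bound by 2^n. *)
Lemma J_zero v : Rabs v < 1 -> J v = 0.
Proof.
  intros Hv. set (u := (Rabs v + 1) / 2). assert (Hv0 := Rabs_pos v).
  assert (Hu : 0 < u < 1) by (unfold u; lra).
  set (B := PI * (ln 4 - ln ((1 - u) ^ 2))).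
  assert (K : forall n w, Rabs w <= u -> Rabs (J w) <= B / 2 ^ n).
  { induction n as [|n IH]; intros w Hw.
    - rewrite pow_O, Rdiv_1_r. apply J_bound; lra.
    - assert (Hw0 := Rabs_pos w).
      assert (Hw2 : Rabs (w ^ 2) <= Rabs w) by (rewrite <- RPow_abs; nra).
      assert (E := IH (w ^ 2) ltac:(lra)).
      rewrite J_sq, Rabs_mult, (Rabs_right 2) in E by lra.
      assert (P : 0 < 2 ^ n) by (apply pow_lt; lra).
      replace (B / 2 ^ S n) with (B / 2 ^ n / 2) by (simpl; field; lra). lra. }
  apply (halving_bound_zero _ B). intro n. apply K. unfold u; lra.
Qed.

Lemma G_props z : 2 < z -> 0 < G z < 1 /\ z = G z + / G z /\ sqrt (z ^ 2 - 4) = / G z - G z.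
Proof.
  intros Hz. unfold G. set (s := sqrt (z ^ 2 - 4)).
  assert (Hs2 : s * s = z ^ 2 - 4) by (apply sqrt_sqrt; nra).
  assert (Hs0 : 0 < s) by (apply sqrt_lt_R0; nra).
  assert (Hsz : s < z) by nra. assert (Hsz2 : z - 2 < s) by nra.
  assert (Hinv : / ((z - s) / 2) = (z + s) / 2) by (field_simplify_eq; [nra|lra]).
  rewrite Hinv. lra.
Qed.

Lemma arcsine_log_potential z : 2 < z ->
  ImproperInt (fun x => ln (z - x) * arcsine_dens x) (-2) 2 (- ln (G z)).
Proof.
  intros Hz. destruct (G_props z Hz) as [Hu [Hzu _]]. set (u := G z) in *.
  assert (Hau : Rabs u < 1) by (rewrite Rabs_right; lra).
  assert (Hf : forall x, -2 < x < 2 ->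
            ln (z - x) * arcsine_dens x = (log_kernel u (acos (x / 2)) + - ln u) * arcsine_dens x).
  { intros x Hx. f_equal. unfold log_kernel. rewrite cos_acos by lra.
    replace (z - x) with ((1 - 2 * u * (x / 2) + u ^ 2) * / u) by (rewrite Hzu; field; lra).
    rewrite ln_mult, ln_Rinv; [reflexivity|lra|nra|apply Rinv_0_lt_compat; lra]. }
  assert (Hi := arcsine_substitution (fun t => log_kernel u t + - ln u)
    (fun t => log_prim u t + (- ln u * t + 0)) _ (-2) 2 ltac:(lra) ltac:(lra) ltac:(lra)
    (fun t => derivable_pt_lim_plus _ _ t _ _ (log_prim_deriv u Hau t) (dlim_affine _ _ t))
    (fun t => continuity_pt_plus _ (fct_cte (- ln u)) t (log_kernel_cont u Hau t)
                (continuity_pt_const (fct_cte (- ln u)) t (fun a b => eq_refl)))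
    Hf).
  rewrite acos_at_m2, acos_at_2 in Hi. unfold log_prim at 2 in Hi. rewrite RI_same in Hi.
  assert (HJ := J_zero u Hau). unfold J in HJ. rewrite HJ in Hi.
  replace (- ln u) with ((0 + (- ln u * PI + 0) - (0 + (- ln u * 0 + 0))) / PI); [exact Hi|].
  assert (HPI := PI_RGT_0). field. lra.
Qed.

Lemma tau_log_potential lam z : 0 < lam -> 2 < z ->
  Rpower (G z) (lam - 1) / sqrt (z ^ 2 - 4)
  = exp (- lam * ((1 - / lam) * (- ln (G z)) + / lam * ((ln (z - (-2)) + ln (z - 2)) / 2))).
Proof.
  intros Hl Hz. destruct (G_props z Hz) as [Hu _].
  rewrite <- Rpower_sqrt by nra. unfold Rpower, Rdiv at 1. rewrite <- exp_Ropp, <- exp_plus.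
  f_equal. replace (z ^ 2 - 4) with ((z - -2) * (z - 2)) by ring.
  rewrite ln_mult by lra. field. lra.
Qed.

Lemma G_closed_forms lam z C : 2 < z ->
  C * Rpower (G z) lam / (1 - G z ^ 2) = C * Rpower (G z) (lam - 1) / sqrt (z ^ 2 - 4).
Proof.
  intros Hz. destruct (G_props z Hz) as [Hu [_ Hs]]. rewrite Hs.
  replace lam with (lam - 1 + 1) at 1 by ring. rewrite Rpower_plus, Rpower_1 by lra.
  field. split; nra.
Qed.

Lemma Rpower_pos x e : 0 < Rpower x e.
Proof. apply exp_pos. Qed.

Lemma Rpower_div x y e : 0 < x -> 0 < y -> Rpower (x / y) e = Rpower x e / Rpower y e.
Proof.
  intros Hx Hy. unfold Rpower, Rdiv. rewrite ln_mult, ln_Rinv by (auto; apply Rinv_0_lt_compat; auto).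
  rewrite <- exp_Ropp, <- exp_plus. f_equal. ring.
Qed.

Lemma dlim_Rpower_affine p k m x : 0 < k * x + m ->
  derivable_pt_lim (fun t => Rpower (k * t + m) p) x (p * Rpower (k * x + m) (p - 1) * k).
Proof.
  intros H. exact (derivable_pt_lim_comp (fun t => k * t + m) (fun s => Rpower s p) x _ _
    (dlim_affine k m x) (derivable_pt_lim_power _ p H)).
Qed.

Lemma dlim_Rpower_quad p x : -2 < x < 2 ->
  derivable_pt_lim (fun t => Rpower (4 - t ^ 2) p) x (p * Rpower (4 - x ^ 2) (p - 1) * (-2 * x)).
Proof.
  intros Hx. apply (derivable_pt_lim_comp (fun t => 4 - t ^ 2) (fun s => Rpower s p)).
  - apply dlim_eq with (0 - INR 2 * x ^ pred 2); [|simpl; ring].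
    apply derivable_pt_lim_minus; [apply derivable_pt_lim_const|apply derivable_pt_lim_pow].
  - apply derivable_pt_lim_power. nra.
Qed.

Lemma cont_Rpower_quad p x : -2 < x < 2 -> continuity_pt (fun t => Rpower (4 - t ^ 2) p) x.
Proof. intros Hx. exact (dlim_cont _ _ _ (dlim_Rpower_quad p x Hx)). Qed.

Lemma Rpower_quad_limL p : 0 < p -> limL (fun t => Rpower (4 - t ^ 2) p) 2 0.
Proof.
  intros Hp eps Heps. set (d := Rpower eps (/ p)).
  assert (Ed : Rpower d p = eps).
  { unfold d. rewrite Rpower_mult. replace (/ p * p) with 1 by (field; lra). apply Rpower_1; auto. }
  assert (Hd : 0 < d) by apply Rpower_pos.
  exists (Rmin (d / 4) 1). split; [apply Rmin_pos; lra|]. intros t Ht.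
  assert (H1 := Rmin_l (d / 4) 1). assert (H2 := Rmin_r (d / 4) 1).
  rewrite Rminus_0_r, Rabs_right by (left; apply Rpower_pos).
  rewrite <- Ed. apply Rlt_Rpower_l; [exact Hp|nra].
Qed.

Lemma Rpower_quad_limR p : 0 < p -> limR (fun t => Rpower (4 - t ^ 2) p) (-2) 0.
Proof.
  intros Hp. unfold limR. replace (- -2) with 2 by ring.
  apply limL_ext with (fun t => Rpower (4 - t ^ 2) p) 1; [lra|intros; f_equal; ring|].
  apply Rpower_quad_limL, Hp.
Qed.

Lemma primitive_parity F f b s : (forall t, -b < t < b -> derivable_pt_lim F t (f t)) ->
  F 0 = 0 -> (forall t, -b < t < b -> f (- t) = s * f t) ->
  forall t, -b < t < b -> F (- t) = - s * F t.
Proof.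
  intros HF H0 Hf t Ht.
  assert (D1 : forall x, -b < x < b -> derivable_pt_lim (fun x => F (-1 * x + 0)) x (- s * f x)).
  { intros x Hx. apply dlim_eq with (f (-1 * x + 0) * -1).
    - exact (derivable_pt_lim_comp _ F x _ _ (dlim_affine (-1) 0 x) (HF (-1 * x + 0) ltac:(lra))).
    - replace (-1 * x + 0) with (- x) by ring. rewrite Hf by lra. ring. }
  assert (D2 : forall x, -b < x < b -> derivable_pt_lim (fun x => - s * F x) x (- s * f x)).
  { intros x Hx. apply derivable_pt_lim_scal, HF, Hx. }
  assert (K := same_derivative_const _ _ _ (- b) b D1 D2 t 0 Ht ltac:(lra)).
  cbv beta in K. replace (-1 * 0 + 0) with 0 in K by ring.
  replace (-1 * t + 0) with (- t) in K by ring. rewrite H0 in K. lra.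
Qed.

Lemma limR_of_parity F b s L : 0 < b -> (forall t, -b < t < b -> F (- t) = s * F t) ->
  limL F b L -> limR F (- b) (s * L).
Proof.
  intros Hb HF H. unfold limR. rewrite Ropp_involutive.
  apply limL_ext with (fun t => s * F t) b; [lra|intros t Ht; symmetry; apply HF; lra|].
  apply limL_scal, H.
Qed.

Section Weight.
Variable lam : R.
Hypothesis Hl : 1 / 2 < lam.

Definition weight (y : R) : R := Rpower (4 - y ^ 2) (lam - 3 / 2).
Definition W (t : R) : R := RI weight 0 t.

Lemma weight_cont x : -2 < x < 2 -> continuity_pt weight x.
Proof. apply cont_Rpower_quad. Qed.

Lemma W_deriv x : -2 < x < 2 -> derivable_pt_lim W x (weight x).
Proof. intros Hx. apply RI_primitive with (-2) 2; auto; [apply weight_cont|lra]. Qed.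

Lemma W_odd t : -2 < t < 2 -> W (- t) = -1 * W t.
Proof.
  apply (primitive_parity W weight 2 1 W_deriv (RI_same _ _)).
  intros s _. unfold weight. rewrite Rmult_1_l. f_equal. ring.
Qed.

Definition weight_bound := Rpower 2 (lam - 3 / 2) + Rpower 4 (lam - 3 / 2).

Lemma weight_le t : 0 <= t < 2 -> weight t <= weight_bound * Rpower (2 - t) (lam - 3 / 2).
Proof.
  intros Ht. unfold weight, weight_bound. replace (4 - t ^ 2) with ((2 - t) * (2 + t)) by ring.
  rewrite <- Rpower_mult_distr by lra. rewrite Rmult_comm.
  apply Rmult_le_compat_r; [left; apply Rpower_pos|].
  assert (P2 := Rpower_pos 2 (lam - 3 / 2)). assert (P4 := Rpower_pos 4 (lam - 3 / 2)).
  destruct (Rle_dec 0 (lam - 3 / 2)) as [h|h].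
  - assert (Rpower (2 + t) (lam - 3 / 2) <= Rpower 4 (lam - 3 / 2)) by (apply Rle_Rpower_l; lra). lra.
  - assert (Rpower (2 + t) (lam - 3 / 2) <= Rpower 2 (lam - 3 / 2)); [|lra].
    replace (lam - 3 / 2) with (- (3 / 2 - lam)) by ring. rewrite !Rpower_Ropp.
    apply Rinv_le_contravar; [apply Rpower_pos|]. apply Rle_Rpower_l; lra.
Qed.

(* W has a finite limit at 2, by comparison with a primitive of (2 - t)^(lam - 3/2). *)
Lemma W_limL : exists LW, limL W 2 LW.
Proof.
  set (p := lam - 1 / 2). assert (Hp : 0 < p) by (unfold p; lra).
  assert (HM : 0 < weight_bound) by (unfold weight_bound; generalize (Rpower_pos 2 (lam - 3 / 2)),
    (Rpower_pos 4 (lam - 3 / 2)); lra).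
  apply (dominated_limL W weight (fun t => - weight_bound / p * Rpower (-1 * t + 2) p)
    (fun t => weight_bound * Rpower (2 - t) (lam - 3 / 2)) 0 2 0); [lra| | | |].
  - intros x Hx. apply W_deriv. lra.
  - intros x Hx. apply dlim_eq with (- weight_bound / p * (p * Rpower (-1 * x + 2) (p - 1) * -1)).
    + apply derivable_pt_lim_scal, dlim_Rpower_affine. lra.
    + unfold p. replace (-1 * x + 2) with (2 - x) by ring.
      replace (lam - 1 / 2 - 1) with (lam - 3 / 2) by field. field. lra.
  - intros x Hx. split; [left; apply Rpower_pos|apply weight_le; lra].
  - intros t Ht. assert (P := Rpower_pos (-1 * t + 2) p).
    assert (0 <= weight_bound / p * Rpower (-1 * t + 2) p) by (apply Rmult_le_pos; [apply Rlt_le, Rdiv_lt_0_compat|]; lra).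
    unfold Rdiv in *. lra.
Qed.

Lemma C_exists : exists LW,
  ImproperInt weight (-2) 2 (2 * LW) /\ limL W 2 LW /\ limR W (-2) (- LW).
Proof.
  destruct W_limL as [LW HL].
  assert (HR : limR W (-2) (- LW)).
  { replace (- LW) with (-1 * LW) by ring. apply (limR_of_parity W 2); [lra|exact W_odd|exact HL]. }
  exists LW. split; [|split; auto].
  replace (2 * LW) with (LW - - LW) by ring.
  apply improper_of_prim with (F := W); [lra|apply W_deriv|apply weight_cont|exact HR|exact HL].
Qed.

Definition moment_prim (y : R) : R := - / (2 * (lam - 1 / 2)) * Rpower (4 - y ^ 2) (lam - 1 / 2).

Lemma moment_prim_deriv y : -2 < y < 2 -> derivable_pt_lim moment_prim y (y * weight y).
Proof.
  intros Hy. unfold moment_prim.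
  apply dlim_eq with
    (- / (2 * (lam - 1 / 2)) * ((lam - 1 / 2) * Rpower (4 - y ^ 2) (lam - 1 / 2 - 1) * (-2 * y))).
  - apply derivable_pt_lim_scal, dlim_Rpower_quad, Hy.
  - unfold weight. replace (lam - 1 / 2 - 1) with (lam - 3 / 2) by field. field. lra.
Qed.

Lemma moment_prim_limL : limL moment_prim 2 0.
Proof.
  unfold moment_prim. rewrite <- (Rmult_0_r (- / (2 * (lam - 1 / 2)))).
  apply limL_scal, Rpower_quad_limL. lra.
Qed.

Lemma moment_prim_limR : limR moment_prim (-2) 0.
Proof.
  unfold moment_prim, limR. rewrite <- (Rmult_0_r (- / (2 * (lam - 1 / 2)))).
  apply limL_scal, Rpower_quad_limR. lra.
Qed.

End Weight.

Lemma integrand_cont lam z t : 2 <= z -> -2 < t < 2 ->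
  continuity_pt (fun x => Rpower (4 - x ^ 2) (lam - 3 / 2) / Rpower (z - x) lam) t.
Proof.
  intros Hz Ht. apply continuity_pt_div; [apply cont_Rpower_quad, Ht| |apply Rgt_not_eq, Rpower_pos].
  apply cont_loc with (fun x => Rpower (-1 * x + z) lam) 1; [lra|intros; f_equal; ring|].
  exact (dlim_cont _ _ _ (dlim_Rpower_affine lam (-1) z t ltac:(lra))).
Qed.

(* The substitution y = psi (x) = (x - 2u) / sqrt (1 + u^2 - u x), which maps (-2,2)
   into itself and fixes -2 and 2, transforms (4 - x^2)^(lam - 3/2) (z - x)^(-lam), z = u + 1/u,
   into  K (w (y) + (u/2) y w (y) + (u^3/8) k (y))  with K = u^lam / (1 - u^2) and
   k odd.  Both odd terms integrate to 0, which leaves K C_lam. *)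
Section Transfer.
Variables lam u : R.
Hypothesis Hl : 1 / 2 < lam.
Hypothesis Hu : 0 < u < 1.

Definition cq (y : R) : R := sqrt ((1 - u ^ 2) + (u ^ 2 / 4) * y ^ 2).

Lemma cq_lower y : 0 < sqrt (1 - u ^ 2) <= cq y.
Proof.
  split; [apply sqrt_lt_R0; nra|]. apply sqrt_le_1_alt.
  assert (0 <= u ^ 2 / 4 * y ^ 2) by (apply Rmult_le_pos; nra). lra.
Qed.

Lemma cq_cont y : continuity_pt cq y.
Proof.
  unfold cq. apply (continuity_pt_comp (fun y => (1 - u ^ 2) + (u ^ 2 / 4) * y ^ 2) sqrt).
  - apply derivable_continuous_pt. apply derivable_pt_plus; [apply derivable_pt_const|].
    apply derivable_pt_scal, derivable_pt_pow.
  - apply continuity_pt_sqrt. assert (0 <= u ^ 2 / 4 * y ^ 2) by (apply Rmult_le_pos; nra). nra.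
Qed.

Definition odd_part (y : R) : R := Rpower (4 - y ^ 2) (lam - 1 / 2) * y / (cq y * (1 + cq y)).

Lemma odd_part_cont y : -2 < y < 2 -> continuity_pt odd_part y.
Proof.
  intros Hy. assert (C := cq_cont y). assert (Hc := cq_lower y). unfold odd_part.
  apply continuity_pt_div.
  - apply continuity_pt_mult; [apply cont_Rpower_quad, Hy|apply derivable_continuous_pt, derivable_pt_id].
  - apply continuity_pt_mult; [exact C|].
    apply continuity_pt_plus; [apply continuity_pt_const; intros a b; reflexivity|exact C].
  - nra.
Qed.

Lemma odd_part_odd y : odd_part (- y) = -1 * odd_part y.
Proof.
  unfold odd_part. replace (cq (- y)) with (cq y) by (unfold cq; f_equal; ring).
  replace (4 - (- y) ^ 2) with (4 - y ^ 2) by ring. assert (H := cq_lower y). field. nra.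
Qed.

(* k is bounded on (-2,2), hence integrable up to the ends. *)
Definition odd_bound := Rpower 4 (lam - 1 / 2) * 2 / sqrt (1 - u ^ 2).

Lemma odd_part_bound y : -2 < y < 2 -> Rabs (odd_part y) <= odd_bound.
Proof.
  intros Hy. assert (Hc := cq_lower y).
  set (q := cq y * (1 + cq y)). set (Rp := Rpower (4 - y ^ 2) (lam - 1 / 2)).
  assert (Hq : sqrt (1 - u ^ 2) <= q) by (unfold q; nra).
  assert (HRp : 0 < Rp) by apply Rpower_pos.
  assert (HRp4 : Rp <= Rpower 4 (lam - 1 / 2)) by (apply Rle_Rpower_l; nra).
  change (odd_part y) with (Rp * y / q). unfold odd_bound, Rdiv.
  rewrite !Rabs_mult, Rabs_inv, (Rabs_right Rp), (Rabs_right q) by lra.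
  assert (Ha : Rabs y <= 2) by (apply Rabs_le; lra). assert (Ha0 := Rabs_pos y).
  assert (Hi : / q <= / sqrt (1 - u ^ 2)) by (apply Rinv_le_contravar; lra).
  assert (0 < / q) by (apply Rinv_0_lt_compat; lra).
  apply Rmult_le_compat; nra.
Qed.

Definition odd_prim (t : R) : R := RI odd_part 0 t.

Lemma odd_prim_deriv x : -2 < x < 2 -> derivable_pt_lim odd_prim x (odd_part x).
Proof. intros Hx. apply RI_primitive with (-2) 2; auto; [apply odd_part_cont|lra]. Qed.

Lemma odd_prim_even t : -2 < t < 2 -> odd_prim (- t) = - -1 * odd_prim t.
Proof.
  apply (primitive_parity odd_prim odd_part 2 (-1) odd_prim_deriv (RI_same _ _)).
  intros s _. apply odd_part_odd.
Qed.

(* A bounded integrand has a convergent primitive: odd_prim + M t is nondecreasing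
   and dominated by 2 M t. *)
Lemma odd_prim_limL : exists L, limL odd_prim 2 L.
Proof.
  assert (HM : 0 < odd_bound).
  { unfold odd_bound. assert (H := cq_lower 0). generalize (Rpower_pos 4 (lam - 1 / 2)).
    intros. apply Rdiv_lt_0_compat; lra. }
  destruct (dominated_limL (fun t => odd_prim t + (odd_bound * t + 0)) (fun t => odd_part t + odd_bound)
    (fun t => (2 * odd_bound) * t + 0) (fun _ => 2 * odd_bound) 0 2 (4 * odd_bound)) as [L HL].
  - lra.
  - intros x Hx. apply derivable_pt_lim_plus; [apply odd_prim_deriv; lra|apply dlim_affine].
  - intros x Hx. apply dlim_affine.
  - intros x Hx. assert (B := odd_part_bound x ltac:(lra)).
    assert (B1 := Rle_abs (odd_part x)). assert (B2 := Rle_abs (- odd_part x)).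
    rewrite Rabs_Ropp in B2. lra.
  - intros t Ht. nra.
  - exists (L + (- odd_bound * 2 + 0)).
    apply limL_ext with (fun t => (odd_prim t + (odd_bound * t + 0)) + (- odd_bound * t + 0)) 1;
      [lra|intros; ring|].
    exact (limL_plus _ _ _ _ _ HL (limL_affine _ _ _)).
Qed.

Definition Kc := Rpower u lam / (1 - u ^ 2).

Definition transformed (y : R) : R :=
  Kc * (weight lam y + (u / 2 * (y * weight lam y) + u ^ 3 / 8 * odd_part y)).

Definition transformed_prim (y : R) : R :=
  Kc * (W lam y + (u / 2 * moment_prim lam y + u ^ 3 / 8 * odd_prim y)).

Lemma transformed_prim_deriv y : -2 < y < 2 -> derivable_pt_lim transformed_prim y (transformed y).
Proof.
  intros Hy. unfold transformed_prim, transformed.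
  apply derivable_pt_lim_scal. apply derivable_pt_lim_plus; [apply W_deriv; auto|].
  apply derivable_pt_lim_plus; apply derivable_pt_lim_scal;
    [apply moment_prim_deriv|apply odd_prim_deriv]; auto.
Qed.

(* The odd terms have primitives with equal limits at both ends, so only
   the jump 2 LW of W survives. *)
Lemma transformed_prim_limits LW : limL (W lam) 2 LW -> limR (W lam) (-2) (- LW) ->
  exists L, limL transformed_prim 2 (Kc * (LW + L)) /\ limR transformed_prim (-2) (Kc * (- LW + L)).
Proof.
  intros HL HR. destruct odd_prim_limL as [L3 H3].
  assert (H3R : limR odd_prim (-2) L3).
  { assert (E := limR_of_parity odd_prim 2 (- -1) L3 ltac:(lra) odd_prim_even H3).
    replace (- -1 * L3) with L3 in E by ring. exact E. }
  exists (u / 2 * 0 + u ^ 3 / 8 * L3). split.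
  - apply limL_scal, limL_plus; [exact HL|].
    apply limL_plus; apply limL_scal; [apply moment_prim_limL; lra|exact H3].
  - apply limL_scal, limL_plus; [exact HR|].
    apply limL_plus; apply limL_scal; [apply moment_prim_limR; lra|exact H3R].
Qed.

Definition Df (x : R) : R := 1 + u ^ 2 - u * x.
Definition psi (x : R) : R := (x - 2 * u) / sqrt (Df x).
Definition psi_slope (x : R) : R := (2 - u * x) / (2 * Df x * sqrt (Df x)).

Lemma Df_pos x : -2 <= x <= 2 -> 0 < Df x.
Proof. intros Hx. unfold Df. nra. Qed.

Lemma psi_deriv x : -2 <= x <= 2 -> derivable_pt_lim psi x (psi_slope x).
Proof.
  intros Hx. assert (HD := Df_pos x Hx). assert (Hs := sqrt_lt_R0 _ HD).
  assert (Hss := sqrt_sqrt _ (Rlt_le _ _ HD)).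
  assert (E : forall t, - u * t + (1 + u ^ 2) = Df t) by (intro; unfold Df; ring).
  assert (H1 : derivable_pt_lim (fun t => sqrt (- u * t + (1 + u ^ 2))) x (/ (2 * sqrt (Df x)) * - u)).
  { rewrite <- E. apply (derivable_pt_lim_comp (fun t => - u * t + (1 + u ^ 2)) sqrt);
      [apply dlim_affine|apply derivable_pt_lim_sqrt; rewrite E; exact HD]. }
  assert (H3 := derivable_pt_lim_div (fun t => 1 * t + - 2 * u) _ x _ _
     (dlim_affine _ _ x) H1 ltac:(cbv beta; rewrite E; lra)).
  apply (dlim_ext _ psi) in H3.
  - apply (dlim_eq _ _ _ _ H3). unfold psi_slope. cbv beta. rewrite E. unfold Rsqr.
    set (s := sqrt (Df x)) in *. rewrite <- Hss.
    assert (Hx' : x = (1 + u ^ 2 - s * s) / u) by (rewrite Hss; unfold Df; field; lra).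
    rewrite Hx'. field. lra.
  - intro t. unfold psi, div_fct. rewrite E. f_equal. ring.
Qed.

Lemma psi_cont x : -2 <= x <= 2 -> continuity_pt psi x.
Proof. intros Hx. exact (dlim_cont _ _ _ (psi_deriv x Hx)). Qed.

(* psi maps (-2,2) into itself, since 4 - psi x ^ 2 = (4 - x^2) / Df x. *)
Lemma psi_sq x : -2 <= x <= 2 -> 4 - psi x ^ 2 = (4 - x ^ 2) / Df x.
Proof.
  intros Hx. assert (HD := Df_pos x Hx). assert (Hss := sqrt_sqrt _ (Rlt_le _ _ HD)).
  assert (Hs := sqrt_lt_R0 _ HD). unfold psi.
  replace (((x - 2 * u) / sqrt (Df x)) ^ 2) with ((x - 2 * u) ^ 2 / (sqrt (Df x) * sqrt (Df x)))
    by (field; lra).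
  rewrite Hss. unfold Df in *. field. lra.
Qed.

Lemma psi_range x : -2 < x < 2 -> -2 < psi x < 2.
Proof.
  intros Hx. assert (HD := Df_pos x ltac:(lra)). assert (E := psi_sq x ltac:(lra)).
  assert (0 < 4 - psi x ^ 2) by (rewrite E; apply Rdiv_lt_0_compat; nra). nra.
Qed.

Lemma psi_at_2 : psi 2 = 2.
Proof.
  unfold psi, Df. replace (1 + u ^ 2 - u * 2) with ((1 - u) * (1 - u)) by ring.
  rewrite sqrt_square by lra. field. lra.
Qed.

Lemma psi_at_m2 : psi (-2) = -2.
Proof.
  unfold psi, Df. replace (1 + u ^ 2 - u * -2) with ((1 + u) * (1 + u)) by ring.
  rewrite sqrt_square by lra. field. lra.
Qed.

Lemma cq_psi x : -2 <= x <= 2 -> cq (psi x) = (2 - u * x) / (2 * sqrt (Df x)).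
Proof.
  intros Hx. assert (HD := Df_pos x Hx). assert (Hs := sqrt_lt_R0 _ HD).
  assert (Hss := sqrt_sqrt _ (Rlt_le _ _ HD)).
  unfold cq. apply sqrt_lem_1.
  - assert (0 <= u ^ 2 / 4 * psi x ^ 2) by (apply Rmult_le_pos; nra). nra.
  - left; apply Rdiv_lt_0_compat; nra.
  - unfold psi. set (s := sqrt (Df x)) in *.
    assert (Hx' : x = (1 + u ^ 2 - s * s) / u) by (rewrite Hss; unfold Df; field; lra).
    rewrite Hx'. field. lra.
Qed.

Lemma transform_identity x : -2 < x < 2 ->
  transformed (psi x) * psi_slope x = Rpower (4 - x ^ 2) (lam - 3 / 2) / Rpower (u + / u - x) lam.
Proof.
  intros Hx. assert (HD := Df_pos x ltac:(lra)).
  assert (Hs := sqrt_lt_R0 _ HD). assert (Hss := sqrt_sqrt _ (Rlt_le _ _ HD)).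
  assert (Hux : 0 < 2 - u * x) by nra.
  assert (Hy4 := psi_sq x ltac:(lra)). assert (Hc := cq_psi x ltac:(lra)).
  assert (Hw : weight lam (psi x) = Rpower (4 - x ^ 2) (lam - 3 / 2) / Rpower (Df x) (lam - 3 / 2)).
  { unfold weight. rewrite Hy4. apply Rpower_div; nra. }
  assert (Hk : odd_part (psi x) = weight lam (psi x) * (4 - psi x ^ 2) * psi x / (cq (psi x) * (1 + cq (psi x)))).
  { unfold odd_part, weight. replace (lam - 1 / 2) with ((lam - 3 / 2) + 1) by field.
    rewrite Rpower_plus, Rpower_1 by (rewrite Hy4; apply Rdiv_lt_0_compat; nra). reflexivity. }
  assert (Hz : Rpower (u + / u - x) lam = Rpower (Df x) lam / Rpower u lam).
  { replace (u + / u - x) with (Df x / u) by (unfold Df; field; lra). apply Rpower_div; lra. }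
  assert (HDl : Rpower (Df x) lam = Rpower (Df x) (lam - 3 / 2) * Df x * sqrt (Df x)).
  { replace lam with ((lam - 3 / 2) + 1 + / 2) at 1 by field.
    rewrite !Rpower_plus, Rpower_1, Rpower_sqrt by lra. reflexivity. }
  unfold transformed, psi_slope, Kc. rewrite Hk, Hw, Hc, Hy4, Hz, HDl.
  assert (PA := Rpower_pos (4 - x ^ 2) (lam - 3 / 2)).
  assert (PD := Rpower_pos (Df x) (lam - 3 / 2)). assert (PU := Rpower_pos u lam).
  unfold psi. set (A := Rpower (4 - x ^ 2) (lam - 3 / 2)) in *.
  set (RD := Rpower (Df x) (lam - 3 / 2)) in *. set (Ru := Rpower u lam) in *.
  set (s := sqrt (Df x)) in *. clearbody A RD Ru.
  assert (Hx' : x = (1 + u ^ 2 - s * s) / u) by (rewrite Hss; unfold Df; field; lra).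
  rewrite <- Hss. rewrite Hx'. field. repeat split; nra.
Qed.

Lemma transfer_integral LW : limL (W lam) 2 LW -> limR (W lam) (-2) (- LW) ->
  ImproperInt (fun x => Rpower (4 - x ^ 2) (lam - 3 / 2) / Rpower (u + / u - x) lam) (-2) 2
    (Kc * (2 * LW)).
Proof.
  intros HL HR. destruct (transformed_prim_limits LW HL HR) as [L [Hb Ha]].
  assert (Hz : 2 <= u + / u).
  { replace (u + / u) with (2 + (1 - u) ^ 2 / u) by (field; lra).
    assert (0 <= (1 - u) ^ 2 / u) by (apply Rmult_le_pos; [nra|left; apply Rinv_0_lt_compat; lra]). lra. }
  replace (Kc * (2 * LW)) with (Kc * (LW + L) - Kc * (- LW + L)) by ring.
  apply improper_of_prim with (F := fun x => transformed_prim (psi x)); [lra| | | |].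
  - intros t Ht. rewrite <- transform_identity by exact Ht.
    exact (derivable_pt_lim_comp psi transformed_prim t _ _ (psi_deriv t ltac:(lra))
             (transformed_prim_deriv (psi t) (psi_range t Ht))).
  - intros t Ht. apply integrand_cont; auto.
  - apply (limR_comp_cont transformed_prim psi (-2) _ 4); [lra|apply psi_cont; lra| |].
    + intros t Ht. rewrite psi_at_m2. apply psi_range. lra.
    + rewrite psi_at_m2. exact Ha.
  - apply (limL_comp_cont transformed_prim psi 2 _ 4); [lra|apply psi_cont; lra| |].
    + intros t Ht. rewrite psi_at_2. apply psi_range. lra.
    + rewrite psi_at_2. exact Hb.
Qed.
End Transfer.

Theorem mainTheorem2 (lam : R) (hlam : 1 / 2 < lam) :
  (exists C : R,
     ImproperInt (fun x => Rpower (4 - x ^ 2) (lam - 3 / 2)) (-2) 2 C /\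
     forall z : R, 2 < z ->
       ImproperInt (fun x => Rpower (4 - x ^ 2) (lam - 3 / 2) / Rpower (z - x) lam)
         (-2) 2 (C * Rpower (G z) lam / (1 - G z ^ 2)) /\
       C * Rpower (G z) lam / (1 - G z ^ 2)
         = C * Rpower (G z) (lam - 1) / sqrt (z ^ 2 - 4)) /\
  (forall z : R, 2 < z ->
     exists I : R,
       ImproperInt (fun x => ln (z - x) * arcsine_dens x) (-2) 2 I /\
       Rpower (G z) (lam - 1) / sqrt (z ^ 2 - 4)
         = exp (- lam * ((1 - / lam) * I
                         + / lam * ((ln (z - (-2)) + ln (z - 2)) / 2)))) /\
  (forall a b : R, a <= -2 -> 2 <= b -> tau_mass lam a b 1) /\
  (tau_nonneg lam <-> 1 <= lam).
Proof.
  split; [|split; [|split]].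
  - destruct (C_exists lam hlam) as [LW [HC [HL HR]]].
    exists (2 * LW). split; [exact HC|]. intros z Hz.
    split; [|apply G_closed_forms, Hz].
    destruct (G_props z Hz) as [Hu [Hzu _]].
    assert (E := transfer_integral lam (G z) hlam Hu LW HL HR). rewrite <- Hzu in E.
    replace (2 * LW * Rpower (G z) lam / (1 - G z ^ 2)) with (Kc lam (G z) * (2 * LW))
      by (unfold Kc; field; nra).
    exact E.
  - intros z Hz. exists (- ln (G z)).
    split; [apply arcsine_log_potential, Hz|apply tau_log_potential; lra].
  - apply tau_total_mass. lra.
  - apply tau_nonneg_iff. lra.
Qed.
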